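(* Let $\mathcal{A}=\{A_i\}_{i\in\Lambda}$ be a finite family of $GL_{d+1}(\mathbb{R})$ matrices, and let $\Phi_{\mathcal{A}}=\{\varphi_{A_i}\}_{i\in\Lambda}$ be the induced IFS on the unit sphere $\mathbb{S}^d$. If $\Phi_{\mathcal{A}}$ satisfies the strong exponential separation condition on a nonempty set, then $\mathcal{A}$ is strongly Diophantine.
   Context: $\varphi_A(x)=A\cdot x=Ax/\|Ax\|$ for unit vectors $x\in\mathbb{S}^d$; $\mathbb S^d$ carries the Euclidean metric. For $\mathbf{i}=i_1\ldots i_n$, $A_{\mathbf i}=A_{i_1}\cdots A_{i_n}$ and $\varphi_{\mathbf i}=\varphi_{A_{i_1}}\circ\cdots\circ\varphi_{A_{i_n}}$. $\Phi_{\mathcal{A}}$ satisfies the strong exponential separation condition on $J\subset\mathbb S^d$ if $\varphi_{\mathbf i}\equiv\varphi_{\mathbf j}$ only when $\mathbf i=\mathbf j$, and there is $c>0$ such that for all $n$ and all $\mathbf{i},\mathbf{j}\in\Lambda^n$ with $i_1\ne j_1$ and $\varphi_{\mathbf i}\not\equiv\varphi_{\mathbf j}$, $\sup_{x\in J}\|\varphi_{\mathbf i}(x)-\varphi_{\mathbf j}(x)\|>c^n$. $\mathcal{A}$ is strongly Diophantine if there is $c>0$ such that $\|A_{\mathbf i}-A_{\mathbf j}\|>c^n$ (operator norm) for all $n$ and all $\mathbf i\ne\mathbf j\in\Lambda^n$. *)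

From HB Require Import structures.
From mathcomp Require Import all_boot all_order all_algebra.
From mathcomp Require Import all_classical all_reals.
Set Implicit Arguments. Unset Strict Implicit. Unset Printing Implicit Defensive.
Import Order.TTheory GRing.Theory Num.Theory.
Local Open Scope ring_scope.
Local Open Scope classical_set_scope.

Definition vnorm (R : realType) (d : nat) (x : 'cV[R]_d.+1) : R :=
  Num.sqrt (\sum_(k < d.+1) (x k ord0) ^+ 2).

Definition sphere (R : realType) (d : nat) : set 'cV[R]_d.+1 :=
  [set x | vnorm x = 1].

Definition opnorm (R : realType) (d : nat) (M : 'M[R]_d.+1) : R :=
  sup [set vnorm (M *m x) | x in @sphere R d].

Definition phiA (R : realType) (d : nat) (M : 'M[R]_d.+1) (x : 'cV[R]_d.+1)
  : 'cV[R]_d.+1 := (vnorm (M *m x))^-1 *: (M *m x).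

Definition Aword (R : realType) (d : nat) (L : finType) (A : L -> 'M[R]_d.+1)
  (w : seq L) : 'M[R]_d.+1 := \prod_(i <- w) A i.

Definition phiword (R : realType) (d : nat) (L : finType) (A : L -> 'M[R]_d.+1)
  (w : seq L) : 'cV[R]_d.+1 -> 'cV[R]_d.+1 :=
  foldr (fun i f => phiA (A i) \o f) id w.

Definition same_on_sphere (R : realType) (d : nat)
  (f g : 'cV[R]_d.+1 -> 'cV[R]_d.+1) : Prop :=
  forall x, @sphere R d x -> f x = g x.

Definition first_differ (L : finType) (i j : seq L) : Prop :=
  match i, j with a :: _, b :: _ => a <> b | _, _ => False end.

Definition strong_exp_sep (R : realType) (d : nat) (L : finType)
  (A : L -> 'M[R]_d.+1) (J : set 'cV[R]_d.+1) : Prop :=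
  (forall i j : seq L,
      same_on_sphere (phiword A i) (phiword A j) -> i = j) /\
  exists c : R, 0 < c /\
    forall (n : nat) (i j : seq L), size i = n -> size j = n ->
      first_differ i j -> ~ same_on_sphere (phiword A i) (phiword A j) ->
      sup [set vnorm (phiword A i x - phiword A j x) | x in J] > c ^+ n.

Definition strongly_diophantine (R : realType) (d : nat) (L : finType)
  (A : L -> 'M[R]_d.+1) : Prop :=
  exists c : R, 0 < c /\
    forall (n : nat) (i j : seq L), size i = n -> size j = n -> i <> j ->
      opnorm (Aword A i - Aword A j) > c ^+ n.

From HB Require Import structures.
From mathcomp Require Import all_boot all_order all_algebra.
From mathcomp Require Import all_classical all_reals.
From mathcomp Require Import ring lra.

Set Implicit Arguments.
Unset Strict Implicit.
Unset Printing Implicit Defensive.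
Import Order.TTheory GRing.Theory Num.Theory.
Local Open Scope ring_scope.
Local Open Scope classical_set_scope.

(* Write two distinct words of length n as u a i' and u b j' with a <> b.
   Strong exponential separation yields a unit vector x in J at which
   phi_(a i') and phi_(b j') are more than c^m apart, m = size (a i').
   With y := A_(a i') x and z := A_(b j') x we have
   |y/|y| - z/|z|| <= 2 |y - z| / |y|; if every |A_k^-1| is at most K, then
   |y| >= K^-m and |A_u (y - z)| >= K^-(size u) |y - z|.  Since
   A_u (y - z) = (A_(u a i') - A_(u b j')) x, the operator norm of the
   difference exceeds c^m / (2 K^n) >= (min c 1 / (2 K))^n. *)

Section EuclideanNorm.
Variables (R : realType) (d : nat).
Implicit Types (y z u v : 'cV[R]_d.+1) (M N : 'M[R]_d.+1).

Definition dotv u v := \sum_(k < d.+1) u k ord0 * v k ord0.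

Lemma dotvv_ge0 u : 0 <= dotv u u.
Proof. by apply: sumr_ge0 => k _; rewrite -expr2 sqr_ge0. Qed.

Lemma vnormE u : vnorm u = Num.sqrt (dotv u u).
Proof. by congr Num.sqrt; apply: eq_bigr => k _; rewrite expr2. Qed.

Lemma vnorm_ge0 u : 0 <= vnorm u.
Proof. exact: sqrtr_ge0. Qed.

Lemma vnorm_sqr u : vnorm u ^+ 2 = dotv u u.
Proof. by rewrite vnormE sqr_sqrtr ?dotvv_ge0. Qed.

Lemma dotvvD u v : dotv (u + v) (u + v) = dotv u u + 2 * dotv u v + dotv v v.
Proof.
rewrite /dotv mulr_sumr -!big_split /=; apply: eq_bigr => k _.
by rewrite mxE; ring.
Qed.

Lemma lagrange_identity u v :
  \sum_(i < d.+1) \sum_(j < d.+1) (u i ord0 * v j ord0 - u j ord0 * v i ord0) ^+ 2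
  = 2 * (dotv u u * dotv v v - dotv u v ^+ 2).
Proof.
have -> : 2 * (dotv u u * dotv v v - dotv u v ^+ 2)
        = dotv u u * dotv v v + dotv v v * dotv u u - 2 * (dotv u v * dotv u v).
  by ring.
rewrite /dotv !big_distrlr mulr_sumr -sumrN -!big_split /=.
apply: eq_bigr => i _; rewrite mulr_sumr -sumrN -!big_split /=.
by apply: eq_bigr => j _; ring.
Qed.

Lemma cauchy_schwarz u v : dotv u v <= vnorm u * vnorm v.
Proof.
have lagrange_ge0 : 0 <= 2 * (dotv u u * dotv v v - dotv u v ^+ 2).
  by rewrite -lagrange_identity; do 2!apply: sumr_ge0 => ? _; apply: sqr_ge0.
have := mulr_ge0 (vnorm_ge0 u) (vnorm_ge0 v).
have := vnorm_sqr u; have := vnorm_sqr v; nra.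
Qed.

Lemma vnormD u v : vnorm (u + v) <= vnorm u + vnorm v.
Proof.
rewrite -ler_sqr ?nnegrE ?addr_ge0 ?vnorm_ge0 // vnorm_sqr dotvvD sqrrD.
by rewrite !vnorm_sqr; have := cauchy_schwarz u v; lra.
Qed.

Lemma vnormZ a u : vnorm (a *: u) = `|a| * vnorm u.
Proof.
rewrite /vnorm (eq_bigr (fun k => a ^+ 2 * u k ord0 ^+ 2)) => [|k _]; last first.
  by rewrite mxE exprMn.
by rewrite -mulr_sumr sqrtrM ?sqr_ge0 // sqrtr_sqr.
Qed.

Lemma vnormBC u v : vnorm (u - v) = vnorm (v - u).
Proof. by rewrite -opprB -scaleN1r vnormZ normrN1 mul1r. Qed.

Lemma ler_vnorm_dist u v : `|vnorm u - vnorm v| <= vnorm (u - v).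
Proof.
have := vnormD (u - v) v; have := vnormD (v - u) u.
by rewrite !subrK vnormBC ler_norml; lra.
Qed.

Lemma vnorm_coord u k : `|u k ord0| <= vnorm u.
Proof.
rewrite -sqrtr_sqr ler_wsqrtr // (bigD1 k) //= lerDl.
by apply: sumr_ge0 => i _; apply: sqr_ge0.
Qed.

Lemma vnorm_le_coord u (c : R) :
  (forall k, `|u k ord0| <= c) -> vnorm u <= d.+1%:R * c.
Proof.
move=> le_c; have c_ge0 : 0 <= c := le_trans (normr_ge0 _) (le_c ord0).
rewrite -ler_sqr ?nnegrE ?vnorm_ge0 ?mulr_ge0 // /vnorm sqr_sqrtr; last first.
  by apply: sumr_ge0 => k _; apply: sqr_ge0.
apply: (@le_trans _ _ (\sum_(k < d.+1) c ^+ 2)).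
  apply: ler_sum => k _; rewrite -real_normK ?num_real // lerXn2r ?nnegrE //.
rewrite sumr_const card_ord -[_ *+ _]mulr_natl exprMn.
by rewrite ler_wpM2r ?sqr_ge0 // expr2 ler_peMl ?ler1n.
Qed.

Definition mxbound N := d.+1%:R * \sum_k \sum_l `|N k l|.

Lemma mxbound_ge0 N : 0 <= mxbound N.
Proof. by rewrite mulr_ge0 //; do 2!apply: sumr_ge0 => ? _. Qed.

Lemma vnorm_mulmx_le N u : vnorm (N *m u) <= mxbound N * vnorm u.
Proof.
rewrite -mulrA; apply: vnorm_le_coord => k; rewrite mxE.
apply: le_trans (ler_norm_sum _ _ _) _.
apply: (@le_trans _ _ (\sum_l `|N k l| * vnorm u)).
  by apply: ler_sum => l _; rewrite normrM ler_wpM2l ?vnorm_coord.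
rewrite -mulr_suml ler_wpM2r ?vnorm_ge0 // [leRHS](bigD1 k) //= lerDl.
by do 2!apply: sumr_ge0 => ? _.
Qed.

Definition normalize u := (vnorm u)^-1 *: u.

Lemma normalizeZ t u : 0 < t -> normalize (t *: u) = normalize u.
Proof.
move=> t_gt0; rewrite /normalize vnormZ gtr0_norm // scalerA invfM mulrAC.
by rewrite mulVf ?gt_eqF // mul1r.
Qed.

Lemma normalize_dist y z : 0 < vnorm y -> 0 < vnorm z ->
  vnorm y * vnorm (normalize y - normalize z) <= 2 * vnorm (y - z).
Proof.
rewrite /normalize; set a := vnorm y; set b := vnorm z => a_gt0 b_gt0.
have -> : a^-1 *: y - b^-1 *: z = a^-1 *: (y - z) + (a^-1 - b^-1) *: z.
  by rewrite scalerBr scalerBl addrA subrK.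
have coefE : a * (`|a^-1 - b^-1| * b) = `|b - a|.
  have -> : a^-1 - b^-1 = (b - a) / (a * b) by field; rewrite ?gt_eqF.
  by rewrite normrM normfV [`|a * b|]gtr0_norm ?mulr_gt0 //; field; rewrite ?gt_eqF.
apply: le_trans (ler_wpM2l (ltW a_gt0) (vnormD _ _)) _.
rewrite !vnormZ -/b mulrDr mulrA gtr0_norm ?invr_gt0 // mulfV ?gt_eqF // mul1r.
by rewrite coefE; have := ler_vnorm_dist z y; rewrite vnormBC; lra.
Qed.

Lemma phiAE M u : phiA M u = normalize (M *m u).
Proof. by []. Qed.

Lemma phiA_mulmx M N u :
  0 < vnorm (N *m u) -> phiA M (phiA N u) = phiA (M *m N) u.
Proof.
by move=> Nu_gt0; rewrite !phiAE -scalemxAr normalizeZ ?invr_gt0 // mulmxA.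
Qed.

Lemma vnorm_mulmx_le_opnorm M u : sphere u -> vnorm (M *m u) <= opnorm M.
Proof.
move=> u_unit; apply: ub_le_sup; last by exists u.
exists (mxbound M) => _ [v v_unit <-].
by have := vnorm_mulmx_le M v; rewrite v_unit mulr1.
Qed.

End EuclideanNorm.

Section Words.
Variables (R : realType) (d : nat) (L : finType) (A : L -> 'M[R]_d.+1).
Hypothesis A_unit : forall a, A a \in unitmx.

Lemma Aword_cons a w : Aword A (a :: w) = A a * Aword A w.
Proof. by rewrite /Aword big_cons. Qed.

Lemma Aword_cat v w : Aword A (v ++ w) = Aword A v * Aword A w.
Proof. by rewrite /Aword big_cat. Qed.

Definition invA_bound : R := 1 + \sum_a mxbound (invmx (A a)).

Lemma invA_bound_ge1 : 1 <= invA_bound.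
Proof. by rewrite lerDl; apply: sumr_ge0 => a _; apply: mxbound_ge0. Qed.

Lemma invA_bound_ge0 : 0 <= invA_bound.
Proof. exact: le_trans ler01 invA_bound_ge1. Qed.

Lemma vnorm_le_mulA a y : vnorm y <= invA_bound * vnorm (A a *m y).
Proof.
rewrite -{1}(mulKmx (A_unit a) y).
apply: le_trans (vnorm_mulmx_le _ _) _; rewrite ler_wpM2r ?vnorm_ge0 //.
rewrite /invA_bound (bigD1 a) //= addrCA lerDl addr_ge0 //.
by apply: sumr_ge0 => b _; apply: mxbound_ge0.
Qed.

Lemma vnorm_le_mulAword w y :
  vnorm y <= invA_bound ^+ size w * vnorm (Aword A w *m y).
Proof.
elim: w => [|a w IH] /=; first by rewrite /Aword big_nil mul1mx expr0 mul1r.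
apply: le_trans IH _; rewrite Aword_cons -mulmxE -mulmxA exprS -mulrA mulrCA.
by rewrite ler_wpM2l ?vnorm_le_mulA ?exprn_ge0 ?invA_bound_ge0.
Qed.

Lemma vnorm_Aword_gt0 w y : 0 < vnorm y -> 0 < vnorm (Aword A w *m y).
Proof.
move=> y_gt0; rewrite lt_def vnorm_ge0 andbT.
apply: contraTneq (vnorm_le_mulAword w y) => ->.
by rewrite mulr0 -ltNge.
Qed.

Lemma phiwordE w x : sphere x -> phiword A w x = phiA (Aword A w) x.
Proof.
move=> x_unit; elim: w => [|a w IH] /=.
  by rewrite phiAE /Aword big_nil mul1mx /normalize x_unit invr1 scale1r.
by rewrite IH phiA_mulmx ?Aword_cons ?mulmxE // vnorm_Aword_gt0 // x_unit ltr01.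
Qed.

Lemma phiword_dist_le u P Q x : sphere x ->
  vnorm (phiword A P x - phiword A Q x)
    <= 2 * invA_bound ^+ (size u + size P)
         * opnorm (Aword A (u ++ P) - Aword A (u ++ Q)).
Proof.
move=> x_unit; rewrite !phiwordE // !phiAE.
have x_gt0 : 0 < vnorm x by rewrite x_unit ltr01.
have y_gt0 := vnorm_Aword_gt0 P x_gt0; have z_gt0 := vnorm_Aword_gt0 Q x_gt0.
set y := Aword A P *m x in y_gt0 *; set z := Aword A Q *m x in z_gt0 *.
have Kp_ge0 : 0 <= invA_bound ^+ size P by rewrite exprn_ge0 ?invA_bound_ge0.
have y_ge : 1 <= invA_bound ^+ size P * vnorm y.
  by have := vnorm_le_mulAword P x; rewrite x_unit.
have yz_le : vnorm (y - z)
    <= invA_bound ^+ size u * opnorm (Aword A (u ++ P) - Aword A (u ++ Q)).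
  apply: le_trans (vnorm_le_mulAword u _) _.
  rewrite ler_wpM2l ?exprn_ge0 ?invA_bound_ge0 //.
  rewrite /y /z -mulmxBl mulmxA mulmxE mulrBr -!Aword_cat.
  exact: vnorm_mulmx_le_opnorm.
have dist_le := normalize_dist y_gt0 z_gt0.
apply: le_trans (ler_peMl (vnorm_ge0 _) y_ge) _.
by rewrite exprD; nra.
Qed.

End Words.

Lemma split_common_prefix (T : eqType) (i j : seq T) :
  size i = size j -> i <> j ->
  exists u a b i' j',
    [/\ i = u ++ a :: i', j = u ++ b :: j', a <> b & size i' = size j'].
Proof.
elim: i j => [|a i IH] [|b j] //= [size_ij] neq_ij.
have [eq_ab|/eqP neq_ab] := eqVneq a b; last by exists [::], a, b, i, j.
subst b.
have [|u [a' [b' [i' [j' [-> -> ? ?]]]]]] := IH j size_ij.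
  by move=> eq_ij; apply: neq_ij; rewrite eq_ij.
by exists (a :: u), a', b', i', j'.
Qed.

Lemma geometric_le (R : realType) (c K : R) (m n : nat) :
  0 < c <= 1 -> 1 <= K -> (0 < m <= n)%N ->
  (c / (2 * K)) ^+ n * (2 * K ^+ n) <= c ^+ m.
Proof.
move=> /andP[c_gt0 c_le1] K_ge1 /andP[m_gt0 le_mn].
case: n le_mn => [|n] le_mn; first by have := leq_trans m_gt0 le_mn.
have K_gt0 : 0 < K by lra.
have -> : (c / (2 * K)) ^+ n.+1 * (2 * K ^+ n.+1) = c ^+ n.+1 / 2 ^+ n.
  rewrite expr_div_n exprMn !exprS.
  have := exprn_gt0 n K_gt0; have := exprn_gt0 n (ltr0Sn R 1).
  move: (K ^+ n) (2 ^+ n) => Kn tn tn_gt0 Kn_gt0.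
  by field; rewrite !gt_eqF.
apply: le_trans _ (ler_wiXn2l (ltW c_gt0) c_le1 le_mn).
rewrite ler_pdivrMr ?exprn_gt0 //; apply: ler_peMr.
  exact: exprn_ge0 (ltW c_gt0).
by apply: exprn_ege1; rewrite ler1n.
Qed.

Theorem proposition2p2 (R : realType) (d : nat) (L : finType)
  (A : L -> 'M[R]_d.+1) (J : set 'cV[R]_d.+1) :
  (forall i, A i \in unitmx) ->
  J `<=` @sphere R d -> J !=set0 ->
  strong_exp_sep A J -> strongly_diophantine A.
Proof.
move=> A_unit J_sphere [x0 J_x0] [words_inj [c [c_gt0 sep]]].
set c1 := Num.min c 1; set K := invA_bound A.
have c1_gt0 : 0 < c1 by rewrite lt_min c_gt0 ltr01.
have c1_le1 : c1 <= 1 by rewrite ge_min lexx orbT.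
have c1_le : c1 <= c by rewrite ge_min lexx.
have K_ge1 : 1 <= K := invA_bound_ge1 A.
exists (c1 / (2 * K)); split; first by rewrite divr_gt0 ?mulr_gt0 //; lra.
move=> n i j size_i size_j neq_ij.
have [u [a [b [P' [Q' [eq_i eq_j neq_ab size_PQ]]]]]] :=
  split_common_prefix (etrans size_i (esym size_j)) neq_ij.
set P := a :: P'; set Q := b :: Q'.
have [_ [x J_x <-] sep_x] : exists2 r,
    [set vnorm (phiword A P x - phiword A Q x) | x in J] r & c ^+ size P < r.
  apply: sup_gt; first by exists (vnorm (phiword A P x0 - phiword A Q x0)), x0.
  apply: sep => //; first by rewrite /= size_PQ.
  by move=> same_PQ; case: (words_inj P Q same_PQ).
have n_eq : n = (size u + size P)%N by rewrite -size_i eq_i size_cat.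
have dist_le := phiword_dist_le A_unit u P Q (J_sphere _ J_x).
rewrite -eq_i -eq_j -n_eq -/K in dist_le.
have Kn_gt0 : 0 < 2 * K ^+ n by rewrite mulr_gt0 ?exprn_gt0 //; lra.
have geo : (c1 / (2 * K)) ^+ n * (2 * K ^+ n) <= c1 ^+ size P.
  by apply: geometric_le; rewrite ?c1_gt0 ?c1_le1 // n_eq leq_addl.
have pow_le : c1 ^+ size P <= c ^+ size P.
  by apply: lerXn2r; rewrite // nnegrE ltW.
rewrite -(ltr_pM2r Kn_gt0) [X in _ < X]mulrC.
exact: le_lt_trans geo (le_lt_trans pow_le (lt_le_trans sep_x dist_le)).
Qed.
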